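(* Let $G$ be a finite simple undirected graph with vertex set $V$, $|V|=n\ge 1$, in which every vertex has degree at least $2$. Then $$E_{loc}(G)\le \tfrac12\bigl(1+CC(G)\bigr),$$ with equality when $G$ is a complete graph.
   Context: For a graph $H$ and vertices $i,j$, $d_H(i,j)$ is the number of edges in a shortest $i$–$j$ path in $H$, with $d_H(i,j)=\infty$ if no such path exists, and the convention $1/\infty=0$. For a graph $H$ with $k\ge 2$ vertices, its global efficiency is $E_{glob}(H)=\frac{1}{k(k-1)}\sum_{i\neq j} \frac{1}{d_H(i,j)}$, the sum over ordered pairs of distinct vertices. For a vertex $i$ of $G$, $G_i$ is the subgraph of $G$ induced by the neighbors of $i$ (not including $i$). The local efficiency is $E_{loc}(G)=\frac1n\sum_{i\in V} E_{glob}(G_i)$ and the (Watts–Strogatz) clustering coefficient is $CC(G)=\frac1n\sum_{i\in V}\frac{|E(G_i)|}{\binom{|V(G_i)|}{2}}$. *)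

From HB Require Import structures.
From mathcomp Require Import all_boot all_order all_algebra.
Set Implicit Arguments. Unset Strict Implicit. Unset Printing Implicit Defensive.
Import Order.TTheory GRing.Theory Num.Theory.

(* A finite simple graph: vertex type T : finType, adjacency e : rel T,
   symmetric and irreflexive. *)

Local Open Scope ring_scope.
Section GraphDefs.
Variables (T : finType) (e : rel T).

Definition nbhd (i : T) : {set T} := [set j | e i j].

Definition walk_in (S : {set T}) (u v : T) (k : nat) : bool :=
  (u \in S) &&
  [exists p : k.-tuple T,
     [&& path e u p, last u p == v & all (fun x => x \in S) p]].

(* 1 / d_H(u,v) for H the subgraph induced by S, with 1/oo = 0.
   A shortest u-v walk is a path, hence has at most #|T|-1 edges,
   so searching lengths 1..#|T| finds d_H(u,v) (for u <> v) if finite. *)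
Definition inv_dist (R : realFieldType) (S : {set T}) (u v : T) : R :=
  let ks := iota 1 #|T| in
  if has (walk_in S u v) ks
  then ((nth 0%N ks (find (walk_in S u v) ks))%:R)^-1
  else 0.

Definition Eglob (R : realFieldType) (S : {set T}) : R :=
  ((#|S| * (#|S| - 1))%N%:R)^-1 *
  \sum_(u in S) \sum_(v in S | v != u) inv_dist R S u v.

Definition nedges (S : {set T}) : nat :=
  #|[set p : T * T | [&& p.1 \in S, p.2 \in S & e p.1 p.2]]|./2.

Definition Eloc (R : realFieldType) : R :=
  (#|T|%:R)^-1 * \sum_(i : T) Eglob R (nbhd i).

Definition CC (R : realFieldType) : R :=
  (#|T|%:R)^-1 *
  \sum_(i : T) ((nedges (nbhd i))%:R / ('C(#|nbhd i|, 2))%:R).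

End GraphDefs.

(* Proof idea: in the neighbourhood graph G_i, two distinct vertices are at
   distance 1 if adjacent and at distance at least 2 otherwise, so each term
   1/d of E_glob(G_i) is at most (1 + [adjacent])/2.  Averaging over the
   k(k-1) ordered pairs gives E_glob(G_i) <= (1 + 2|E(G_i)|/(k(k-1)))/2,
   which is (1 + local clustering of i)/2; averaging over i gives the claim.
   In a complete graph every bound is attained. *)
From HB Require Import structures.
From mathcomp Require Import all_boot all_order all_algebra.
From mathcomp Require Import ring.
Set Implicit Arguments. Unset Strict Implicit. Unset Printing Implicit Defensive.
Import Order.TTheory GRing.Theory Num.Theory.
Local Open Scope ring_scope.

Lemma bin2_mul2 (n : nat) : ('C(n, 2) * 2 = n * n.-1)%N.
Proof. by rewrite mulnC -mul_bin_diag bin1. Qed.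

(* Split each off-diagonal term as H i j + H j i along the order of enum_rank. *)
Lemma double_sum_sym_even (I : finType) (F : I -> I -> nat) :
  (forall i j, F i j = F j i) -> (forall i, F i i = 0%N) ->
  ~~ odd (\sum_i \sum_j F i j).
Proof.
move=> F_sym F_diag.
pose H i j := if (enum_rank i < enum_rank j)%N then F i j else 0%N.
have -> : (\sum_i \sum_j F i j = \sum_i \sum_j (H i j + H j i))%N.
  apply: eq_bigr => i _; apply: eq_bigr => j _; rewrite /H.
  case: ltngtP => [_|_|/val_inj/enum_rank_inj ->].
  - by rewrite addn0.
  - by rewrite F_sym.
  - by rewrite F_diag.
rewrite (eq_bigr (fun i => \sum_j H i j + \sum_j H j i)%N) => [|i _].
  by rewrite big_split /= [X in (_ + X)%N]exchange_big addnn odd_double.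
by rewrite big_split.
Qed.

Section NeighbourhoodBounds.
Variables (T : finType) (e : rel T).
Hypotheses (e_sym : symmetric e) (e_irr : irreflexive e).

Definition adj_pairs (S : {set T}) : {set T * T} :=
  [set p | [&& p.1 \in S, p.2 \in S & e p.1 p.2]].

Definition edge_density (R : realFieldType) (S : {set T}) : R :=
  (nedges e S)%:R / ('C(#|S|, 2))%:R.

Lemma walk_in1 (S : {set T}) u v :
  walk_in e S u v 1 = [&& u \in S, v \in S & e u v].
Proof.
apply/idP/idP.
  case/andP=> uS /existsP[[[|x [|y s]] sz]] //= /and3P[].
  by rewrite andbT => exv /eqP <- /andP[-> _]; rewrite uS.
case/and3P=> uS vS euv; rewrite /walk_in uS; apply/existsP.
by exists [tuple v]; rewrite /= euv eqxx vS.
Qed.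

Lemma inv_dist_adj (R : realFieldType) (S : {set T}) u v :
  u \in S -> v \in S -> e u v -> inv_dist e R S u v = 1.
Proof.
move=> uS vS euv; rewrite /inv_dist.
have : (0 < #|T|)%N by apply/card_gt0P; exists u.
by case: #|T| => [|n] // _; rewrite /= walk_in1 uS vS euv invr1.
Qed.

Lemma inv_dist_nadj (R : realFieldType) (S : {set T}) u v :
  ~~ e u v -> inv_dist e R S u v <= 2%:R^-1.
Proof.
move=> nuv; rewrite /inv_dist; case: ifP => [has_walk|_]; last first.
  by rewrite invr_ge0 ler0n.
have := nth_find 0%N has_walk; move: has_walk; rewrite has_find size_iota.
move=> lt_find; rewrite nth_iota //; case: find lt_find => [|k] _.
  by rewrite walk_in1 (negbTE nuv) !andbF.
by move=> _; rewrite lef_pV2 ?posrE ?ltr0n // ler_nat ltnS lt0n.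
Qed.

Lemma inv_dist_le_half (R : realFieldType) (S : {set T}) u v :
  u \in S -> v \in S -> inv_dist e R S u v <= (1 + (e u v)%:R) / 2%:R.
Proof.
move=> uS vS; case: (boolP (e u v)) => [euv|nuv].
  by rewrite inv_dist_adj // -[1 + _]/(2%:R) divff ?pnatr_eq0.
by rewrite /= addr0 mul1r inv_dist_nadj.
Qed.

Lemma card_adj_pairs_double_sum (S : {set T}) :
  #|adj_pairs S| = (\sum_u \sum_v [&& u \in S, v \in S & e u v])%N.
Proof.
rewrite pair_bigA -sum1_card big_mkcond /=.
by apply: eq_bigr => p _; rewrite inE; case: (_ && _).
Qed.

Lemma card_adj_pairs (S : {set T}) :
  #|adj_pairs S| = (\sum_(u in S) \sum_(v in S | v != u) e u v)%N.
Proof.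
rewrite card_adj_pairs_double_sum [RHS]big_mkcond; apply: eq_bigr => u _.
case: (boolP (u \in S)) => [uS|_]; last by rewrite big1.
rewrite [RHS]big_mkcond; apply: eq_bigr => v _.
by case: (v \in S); case: eqVneq => [->|]; rewrite ?e_irr.
Qed.

Lemma nedges_double (S : {set T}) : (nedges e S * 2)%N = #|adj_pairs S|.
Proof.
have even_pairs : ~~ odd #|adj_pairs S|.
  rewrite card_adj_pairs_double_sum; apply: double_sum_sym_even => [u v|u].
    by rewrite e_sym; case: (u \in S); case: (v \in S).
  by rewrite e_irr !andbF.
by rewrite muln2 -[RHS]odd_double_half (negbTE even_pairs).
Qed.

Lemma edge_density_pairs (R : realFieldType) (S : {set T}) :
  edge_density R S = #|adj_pairs S|%:R / (#|S| * #|S|.-1)%:R.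
Proof.
rewrite /edge_density -nedges_double -bin2_mul2 !natrM invfM mulrACA.
by rewrite divff ?mulr1 ?pnatr_eq0.
Qed.

Lemma sum_half_incr (R : realFieldType) (S : {set T}) :
  \sum_(u in S) \sum_(v in S | v != u) (1 + (e u v)%:R) / 2%:R
  = (#|S| * #|S|.-1 + #|adj_pairs S|)%:R / 2%:R :> R.
Proof.
under eq_bigr do rewrite -mulr_suml.
rewrite -mulr_suml; congr (_ / _).
rewrite natrD card_adj_pairs -sum_nat_const !natr_sum -big_split /=.
apply: eq_bigr => u uS; rewrite natr_sum big_split /= sumr_const.
congr (_%:R + _); rewrite (cardsD1 u S) uS /=.
by apply: eq_card => v; rewrite !inE andbC.
Qed.

Lemma mean_half_incr (R : realFieldType) (S : {set T}) : (2 <= #|S|)%N ->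
  ((#|S| * (#|S| - 1))%N%:R)^-1 *
    \sum_(u in S) \sum_(v in S | v != u) (1 + (e u v)%:R) / 2%:R
  = (1 + edge_density R S) / 2%:R.
Proof.
move=> S_ge2; rewrite sum_half_incr edge_density_pairs subn1.
rewrite natrD; field.
by rewrite !pnatr_eq0 -!lt0n -subn1 subn_gt0 S_ge2 ltnW.
Qed.

Lemma Eglob_le_half_incr (R : realFieldType) (S : {set T}) : (2 <= #|S|)%N ->
  Eglob e R S <= (1 + edge_density R S) / 2%:R.
Proof.
move=> S_ge2; rewrite /Eglob -mean_half_incr //.
rewrite ler_wpM2l ?invr_ge0 ?ler0n //.
by apply: ler_sum => u uS; apply: ler_sum => v /andP[vS _]; apply: inv_dist_le_half.
Qed.

Lemma Eglob_complete (R : realFieldType) (S : {set T}) :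
  (forall u v, u != v -> e u v) -> (2 <= #|S|)%N ->
  Eglob e R S = (1 + edge_density R S) / 2%:R.
Proof.
move=> e_complete S_ge2; rewrite /Eglob -mean_half_incr //; congr (_ * _).
apply: eq_bigr => u uS; apply: eq_bigr => v /andP[vS vu].
have euv : e u v by rewrite e_complete // eq_sym.
by rewrite inv_dist_adj // euv -[1 + _]/(2%:R) divff ?pnatr_eq0.
Qed.

End NeighbourhoodBounds.

Theorem theorem3 (R : realFieldType) (T : finType) (e : rel T)
    (e_sym : symmetric e) (e_irr : irreflexive e)
    (hn : (0 < #|T|)%N)
    (hdeg : forall i : T, (2 <= #|nbhd e i|)%N) :
  Eloc e R <= (1 + CC e R) / 2%:R /\
  ((forall u v : T, u != v -> e u v) -> Eloc e R = (1 + CC e R) / 2%:R).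
Proof.
have mean_bound : (#|T|%:R)^-1 * \sum_i (1 + edge_density e R (nbhd e i)) / 2%:R
                  = (1 + CC e R) / 2%:R.
  rewrite -mulr_suml big_split /= sumr_const.
  by rewrite /CC; field; rewrite pnatr_eq0 -lt0n.
rewrite /Eloc -mean_bound; split => [|e_complete].
  rewrite ler_wpM2l ?invr_ge0 ?ler0n //.
  by apply: ler_sum => i _; apply: Eglob_le_half_incr.
by congr (_ * _); apply: eq_bigr => i _; apply: Eglob_complete.
Qed.
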